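(* Consider the spot market described in the context, with fixed leader productions $\mathbf x\in\mathbb{R}_+^M$, and suppose $f_j=f$ for every follower $j$. Then the spot market has a unique Nash equilibrium, given for every follower $j$ by \[y_j=\Big[\frac1{N+1}\Big(\alpha_y+f-\sum_{i=1}^Mx_i\Big)\Big]_0^k.\]
   Context: Model: $M\ge1$ leaders, $N\ge2$ followers; inverse demand $P(q)=\alpha-\beta q$, $\alpha,\beta>0$; follower marginal cost $c>0$; each follower has capacity $k>0$. Given leader productions $x_1,\dots,x_M\ge0$ and follower forward positions $f_1,\dots,f_N\in\mathbb{R}$, the spot market is the game among the $N$ followers in which follower $j$ chooses $y_j\in[0,k]$ to maximize $P(\sum_i x_i+\sum_{j'}y_{j'})(y_j-f_j)-cy_j$. Normalized follower demand: $\alpha_y=(\alpha-c)/\beta$. For $a\le b$, $[z]_a^b=\min(\max(z,a),b)$. *)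

From mathcomp Require Import all_boot all_order all_algebra.
Set Implicit Arguments. Unset Strict Implicit. Unset Printing Implicit Defensive.
Import Order.TTheory GRing.Theory Num.Theory.
Local Open Scope ring_scope.

Definition clamp (R : realFieldType) (a b z : R) : R := Num.min (Num.max z a) b.

Definition price (R : realFieldType) (alpha beta q : R) : R := alpha - beta * q.

Definition upd (R : realFieldType) (N : nat) (y : 'I_N -> R) (j : 'I_N) (z : R)
  : 'I_N -> R := fun i => if i == j then z else y i.

Definition spot_payoff (R : realFieldType) (M N : nat) (alpha beta c : R)
  (x : 'I_M -> R) (f : 'I_N -> R) (y : 'I_N -> R) (j : 'I_N) : R :=
  price alpha beta (\sum_(i < M) x i + \sum_(j' < N) y j') * (y j - f j) - c * y j.

Definition spot_NE (R : realFieldType) (M N : nat) (alpha beta c k : R)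
  (x : 'I_M -> R) (f : 'I_N -> R) (y : 'I_N -> R) : Prop :=
  forall j : 'I_N, (0 <= y j <= k) /\
    forall z : R, 0 <= z <= k ->
      spot_payoff alpha beta c x f (upd y j z) j <= spot_payoff alpha beta c x f y j.

From mathcomp Require Import all_boot all_order all_algebra ring lra.
Set Implicit Arguments.
Unset Strict Implicit.
Unset Printing Implicit Defensive.

Import Order.TTheory GRing.Theory Num.Theory.
Local Open Scope ring_scope.

(* Moving follower j from y_j to z changes its payoff by beta (z - y_j)(C_j - z),
   where C_j = alpha_y + f_j - X - Y and X, Y are the total leader and follower
   outputs. Hence y_j is a best response on [0,k] iff (z - y_j)(C_j - z) <= 0
   for all z in [0,k], i.e. iff y_j = [C_j]_0^k. With identical forward
   positions all C_j coincide, so an equilibrium is a constant profile y_j = t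
   with t = [A - N t]_0^k, where A = alpha_y + f - X. Writing A = (N+1) u, the
   point A - N t lies on the same side of t as u does, so the clamps agree and
   t = [u]_0^k. *)

Lemma clampP (R : realFieldType) (a b t C : R) : a <= b ->
  t = clamp a b C <-> [/\ a <= t <= b, (a < t -> t <= C) & (t < b -> C <= t)].
Proof.
move=> leab; rewrite /clamp.
case: (leP C a) => Ca; [rewrite (min_l leab) | case: (leP C b) => Cb].
all: split=> [-> | [/andP [at_ tb] low upp]].
all: try by split; [apply/andP; split | move=> ? | move=> ?]; lra.
all: case: (lerP t a) => [ta|/low tC]; case: (lerP b t) => [bt|/upp Ct]; lra.
Qed.

Lemma clamp_variationalP (R : realFieldType) (a b t C : R) : a <= t <= b ->
  (forall z, a <= z <= b -> (z - t) * (C - z) <= 0) <-> t = clamp a b C.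
Proof.
move=> /andP [ta tb]; rewrite clampP; last exact: le_trans tb.
split.
- move=> opt; split; [by apply/andP | move=> at_ | move=> tb_].
  + rewrite leNgt; apply/negP => Ct.
    pose z := (Num.max C a + t) / 2.
    have : a <= z <= b by apply/andP; rewrite /z; case: (leP C a); lra.
    by move/opt; rewrite /z; case: (leP C a) => ?; nra.
  + rewrite leNgt; apply/negP => tC.
    pose z := (Num.min C b + t) / 2.
    have : a <= z <= b by apply/andP; rewrite /z; case: (leP C b); lra.
    by move/opt; rewrite /z; case: (leP C b) => ?; nra.
- case=> _ low upp z /andP [za zb].
  case: (lerP C t) => [Ct|tC].
  + case: (lerP t a) => [ta'|/low tC]; first by apply: mulr_ge0_le0; lra.
    have -> : C = t by lra.
    by rewrite -opprB mulNr -expr2 oppr_le0 sqr_ge0.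
  + have bt : b <= t by rewrite leNgt; apply/negP => /upp; lra.
    by apply: mulr_le0_ge0; lra.
Qed.

Lemma clamp_shift_fixpoint (R : realFieldType) (a b t u n : R) : a <= b -> 0 <= n ->
  t = clamp a b ((n + 1) * u - n * t) <-> t = clamp a b u.
Proof.
move=> leab n_ge0; rewrite !clampP //.
by split=> -[t_range low upp]; split=> // h; [move/low: h | move/upp: h | move/low: h | move/upp: h]; nra.
Qed.

Section SpotMarket.

Variables (R : realFieldType) (M N : nat) (alpha beta c k : R).
Variables (x : 'I_M -> R) (f : 'I_N -> R).

Lemma sumr_upd (y : 'I_N -> R) j z : \sum_i upd y j z i = \sum_i y i - y j + z.
Proof.
rewrite (bigD1 j) //= [in RHS](bigD1 j) //= /upd eqxx.
rewrite (eq_bigr y); last by move=> i /negbTE ->.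
ring.
Qed.

Lemma spot_payoff_upd_sub (y : 'I_N -> R) j z : beta != 0 ->
  spot_payoff alpha beta c x f (upd y j z) j - spot_payoff alpha beta c x f y j
  = beta * ((z - y j) * ((alpha - c) / beta + f j - \sum_i x i - \sum_i y i - z)).
Proof.
move=> beta_neq0; rewrite /spot_payoff /price sumr_upd /upd eqxx.
by field.
Qed.

Lemma spot_NEP (y : 'I_N -> R) : 0 < beta -> 0 <= k ->
  spot_NE alpha beta c k x f y <->
  forall j, y j = clamp 0 k ((alpha - c) / beta + f j - \sum_i x i - \sum_i y i).
Proof.
move=> beta_gt0 k_ge0.
have gain_le0 j z : spot_payoff alpha beta c x f (upd y j z) j
    <= spot_payoff alpha beta c x f y j <->
  (z - y j) * ((alpha - c) / beta + f j - \sum_i x i - \sum_i y i - z) <= 0.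
  by rewrite -subr_le0 spot_payoff_upd_sub ?gt_eqF // pmulr_rle0.
split=> [NE j | y_clamp j].
- have [y_range best] := NE j.
  rewrite -clamp_variationalP // => z /best.
  by rewrite gain_le0.
- have y_range : 0 <= y j <= k by case: ((clampP _ _ k_ge0).1 (y_clamp j)).
  split=> // z z_range; rewrite gain_le0.
  by move: z z_range; apply/clamp_variationalP.
Qed.

End SpotMarket.

Lemma clamp_symmetric_fixpointP (R : realFieldType) (a b A : R) N (y : 'I_N -> R) :
  a <= b ->
  (forall j, y j = clamp a b (A - \sum_i y i)) <->
  forall j, y j = clamp a b (N.+1%:R^-1 * A).
Proof.
move=> leab.
have sum_const t : (forall j, y j = t) -> \sum_i y i = N%:R * t.
  by move=> yt; rewrite (eq_bigr (fun=> t)) // sumr_const card_ord mulr_natl.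
have A_split : A = (N%:R + 1) * (N.+1%:R^-1 * A).
  by rewrite mulrA natr1 mulfV ?mul1r // pnatr_eq0.
have N_ge0 : (0 : R) <= N%:R by apply: ler0n.
split=> y_clamp j.
- set t := clamp a b _ in y_clamp; rewrite y_clamp.
  apply/(clamp_shift_fixpoint _ _ leab N_ge0).
  by rewrite -A_split -(sum_const t y_clamp).
- set t := clamp a b _ in y_clamp; rewrite y_clamp (sum_const t y_clamp) {1}A_split.
  exact/(clamp_shift_fixpoint _ _ leab N_ge0).
Qed.

Theorem proposition2 (R : realFieldType) (M N : nat) (alpha beta c k f : R)
  (x : 'I_M -> R) (fs : 'I_N -> R) :
  (1 <= M)%N -> (2 <= N)%N ->
  0 < alpha -> 0 < beta -> 0 < c -> 0 < k ->
  (forall i, 0 <= x i) ->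
  (forall j, fs j = f) ->
  forall y : 'I_N -> R,
    spot_NE alpha beta c k x fs y <->
    (forall j : 'I_N,
       y j = clamp 0 k ((N.+1%:R)^-1 * ((alpha - c) / beta + f - \sum_(i < M) x i))).
Proof.
move=> _ _ _ beta_gt0 _ k_gt0 _ fs_f y.
rewrite spot_NEP ?ltW // -(clamp_symmetric_fixpointP _ _ (ltW k_gt0)).
by split=> y_clamp j; rewrite y_clamp fs_f.
Qed.
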